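(* Let $(L_i)_{i\in I}$ be a family of upper continuous lattices with zero, pairwise intersecting in $\{0\}$, and let $L=\coprod^0_{i\in I}L_i$ with each $L_i$ identified with its canonical copy in $L$. Let $\Pi=\prod_{(i,n)\in I\times\omega}L_i$ (ordered componentwise), and for a lattice term $\mathbf{p}$ with variables from $I\times\omega$ and $\vec a=(a_{i,n})\in\Pi$ let $\mathbf{p}(\vec a)\in L$ denote the value of $\mathbf{p}$ in $L$ when each variable $(i,n)$ is assigned $a_{i,n}$. Let $\Lambda$ be an upward directed poset and $(\vec a^{\lambda})_{\lambda\in\Lambda}$ an isotone family of elements of $\Pi$ with supremum $\vec a$ in $\Pi$. Then for every lattice term $\mathbf{p}$ on $I\times\omega$, $\mathbf{p}(\vec a)=\bigvee_{\lambda\in\Lambda}\mathbf{p}(\vec a^{\lambda})$ in $L$.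
   Context: $\coprod^0$ denotes the coproduct in the category of lattices with zero and zero-preserving homomorphisms; $\omega$ is the set of natural numbers. A lattice $M$ is upper continuous if for each $a\in M$ and each upward directed subset $\{x_j: j\in J\}$ of $M$ that has a join, $a\wedge\bigvee_{j}x_j=\bigvee_j(a\wedge x_j)$. *)

From HB Require Import structures.
From mathcomp Require Import all_boot all_order.

Import Order.TTheory.
Local Open Scope order_scope.

Definition is_lub {T : Type} (le : T -> T -> Prop) (X : T -> Prop) (s : T) : Prop :=
  (forall x, X x -> le x s) /\ (forall u, (forall x, X x -> le x u) -> le s u).

Definition up_directed {T : Type} (le : T -> T -> Prop) (X : T -> Prop) : Prop :=
  (exists x, X x) /\
  (forall x y, X x -> X y -> exists z, X z /\ le x z /\ le y z).

Definition upper_continuous {d : Order.disp_t} (M : latticeType d) : Prop :=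
  forall (a : M) (X : M -> Prop) (s : M),
    up_directed (fun x y => x <= y) X ->
    is_lub (fun x y => x <= y) X s ->
    is_lub (fun x y => x <= y) (fun y => exists x, X x /\ y = a `&` x) (a `&` s).

Definition zlat_hom {d d' : Order.disp_t} {A : bLatticeType d} {B : bLatticeType d'}
  (f : A -> B) : Prop :=
  f \bot = \bot /\ (forall x y, f (x `&` y) = f x `&` f y) /\
  (forall x y, f (x `|` y) = f x `|` f y).

Definition is_coproduct0 {I : Type} {d : I -> Order.disp_t}
  (Li : forall i, bLatticeType (d i)) {dL : Order.disp_t} (L : bLatticeType dL)
  (e : forall i, Li i -> L) : Prop :=
  (forall i, zlat_hom (e i)) /\
  (forall (dM : Order.disp_t) (M : bLatticeType dM) (f : forall i, Li i -> M),
      (forall i, zlat_hom (f i)) ->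
      exists h : L -> M, zlat_hom h /\ (forall i x, h (e i x) = f i x) /\
        (forall h' : L -> M, zlat_hom h' -> (forall i x, h' (e i x) = f i x) ->
           forall y, h' y = h y)).

Inductive lterm (V : Type) : Type :=
  | LVar : V -> lterm V
  | LMeet : lterm V -> lterm V -> lterm V
  | LJoin : lterm V -> lterm V -> lterm V.
Arguments LVar {V}. Arguments LMeet {V}. Arguments LJoin {V}.

Fixpoint leval {V : Type} {d : Order.disp_t} {M : latticeType d}
  (v : V -> M) (p : lterm V) : M :=
  match p with
  | LVar x => v x
  | LMeet p q => leval v p `&` leval v q
  | LJoin p q => leval v p `|` leval v q
  end.

(* Every element of L is the value of a lattice term over the disjoint union of
   the L_i, and such values compare exactly as Gratzer's order for free
   products: Whitman's rules together with the rule p <= x <= q for x in some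
   L_i, expressed through the lower cover (largest element of L_i below a term)
   and the upper cover (least element of L_i above it).  The order is sound for
   evaluation in any lattice with zero, and complete for L by the universal
   property applied to the term model.
   Along the directed family the upper covers of p(a^l) converge to those of
   p(a): coordinatewise for joins, by upper continuity of the L_i for meets, and
   a meet collapses to 0 only through one of the finitely many indices occurring
   in p.  If p(a^l) <= u for every l, each derivation begins with one of finitely
   many rules whose premises are down-closed in l; in a directed set one of them
   then holds for every l, and induction on p and u gives p(a) <= u. *)

From HB Require Import structures.
From mathcomp Require Import all_boot all_order.
From mathcomp Require Import boolp.
Import Order.TTheory.
Local Open Scope order_scope.

Set Implicit Arguments.
Unset Strict Implicit.
Unset Printing Implicit Defensive.

Section ZeroHom.
Context {dA dB : Order.disp_t} {A : bLatticeType dA} {B : bLatticeType dB}.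
Implicit Type h : A -> B.

Lemma zlat_hom0 h : zlat_hom h -> h \bot = \bot.
Proof. by case. Qed.

Lemma zlat_homI h : zlat_hom h -> forall x y, h (x `&` y) = h x `&` h y.
Proof. by case=> _ []. Qed.

Lemma zlat_homU h : zlat_hom h -> forall x y, h (x `|` y) = h x `|` h y.
Proof. by case=> _ []. Qed.

Lemma zlat_hom_homo h : zlat_hom h -> {homo h : x y / x <= y}.
Proof. by move=> hh x y /meet_idPl <-; rewrite zlat_homI // leIr. Qed.

Lemma zlat_hom_comp {dC} {C : bLatticeType dC} h (g : B -> C) :
  zlat_hom h -> zlat_hom g -> zlat_hom (g \o h).
Proof.
move=> [h0 [hI hU]] [g0 [gI gU]]; split; last split.
- by rewrite /= h0 g0.
- by move=> x y; rewrite /= hI gI.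
- by move=> x y; rewrite /= hU gU.
Qed.

End ZeroHom.

Lemma zlat_hom_id {dA} {A : bLatticeType dA} : zlat_hom (@id A).
Proof. by []. Qed.

Section OptionTop.
Context {disp : Order.disp_t} {X : bLatticeType disp}.
Implicit Types (a b c : option X) (x y : X).

Definition ole a b : bool :=
  if b is Some y then (if a is Some x then x <= y else false) else true.

Definition omeet a b : option X :=
  match a, b with
  | Some x, Some y => Some (x `&` y)
  | None, _ => b
  | _, None => a
  end.

Definition ojoin a b : option X :=
  if a is Some x then (if b is Some y then Some (x `|` y) else None) else None.

Lemma ole_refl a : ole a a.
Proof. by case: a => /=. Qed.

Lemma ole_trans a b c : ole a b -> ole b c -> ole a c.
Proof. by case: c => // z; case: b => // y; case: a => // x; apply: le_trans. Qed.

Lemma ole0x a : ole (Some \bot) a.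
Proof. by case: a => //= y; rewrite le0x. Qed.

Lemma oleNx a : ole None a -> a = None.
Proof. by case: a. Qed.

Lemma olex0 a : ole a (Some \bot) -> a = Some \bot.
Proof. by case: a => //= x; rewrite lex0 => /eqP ->. Qed.

Lemma oleS a y : ole a (Some y) -> exists2 x, a = Some x & x <= y.
Proof. by case: a => //= x; exists x. Qed.

Lemma oleIl a b : ole (omeet a b) a.
Proof. by case: a; case: b => //= *; rewrite ?leIl. Qed.

Lemma oleIr a b : ole (omeet a b) b.
Proof. by case: a; case: b => //= *; rewrite ?leIr. Qed.

Lemma olexI a b c : ole c a -> ole c b -> ole c (omeet a b).
Proof. by case: a; case: b; case: c => //= *; rewrite lexI; apply/andP. Qed.

Lemma oleI2 a b a' b' : ole a a' -> ole b b' -> ole (omeet a b) (omeet a' b').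
Proof.
by move=> aa' bb'; apply: olexI; [apply: ole_trans aa'|apply: ole_trans bb'];
  rewrite ?oleIl ?oleIr.
Qed.

Lemma oleUl a b : ole a (ojoin a b).
Proof. by case: a; case: b => //= *; rewrite leUl. Qed.

Lemma oleUr a b : ole b (ojoin a b).
Proof. by case: a; case: b => //= *; rewrite leUr. Qed.

Lemma oleUx a b c : ole a c -> ole b c -> ole (ojoin a b) c.
Proof. by case: c => // z; case: a => // x; case: b => //= y; rewrite leUx => -> ->. Qed.

Lemma oleU2 a b a' b' : ole a a' -> ole b b' -> ole (ojoin a b) (ojoin a' b').
Proof.
by move=> aa' bb'; apply: oleUx; [apply: ole_trans aa' _|apply: ole_trans bb' _];
  rewrite ?oleUl ?oleUr.
Qed.

Lemma omeet0x b : omeet (Some \bot) b = Some \bot.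
Proof. by case: b => //= y; rewrite meet0x. Qed.

Lemma omeetx0 a : omeet a (Some \bot) = Some \bot.
Proof. by case: a => //= x; rewrite meetx0. Qed.

Lemma omeetxN a : omeet a None = a.
Proof. by case: a. Qed.

Lemma ojoinxN a : ojoin a None = None.
Proof. by case: a. Qed.

End OptionTop.

Section Covers.
Context {I : Type} {d : I -> Order.disp_t} {Li : forall i, bLatticeType (d i)}.

Definition atom := {i : I & Li i}.
Local Notation term := (lterm atom).

Definition coord (i : I) (s : atom) : option (Li i) :=
  match pselect (projT1 s = i) with
  | left E => Some (eq_rect _ Li (projT2 s) i E)
  | right _ => None
  end.

Lemma coord_eq i (x : Li i) : coord i (existT _ i x) = Some x.
Proof. by rewrite /coord; case: pselect => //= E; rewrite (Prop_irrelevance E erefl). Qed.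

Lemma coord_neq i j (x : Li j) : j <> i -> coord i (existT _ j x) = None.
Proof. by rewrite /coord; case: pselect. Qed.

Lemma coord_Some_index i j (x : Li j) y : coord i (existT _ j x) = Some y -> j = i.
Proof. by rewrite /coord; case: pselect. Qed.

Lemma coord_Some i s y : coord i s = Some y -> s = existT _ i y.
Proof. by case: s => j x; rewrite /coord; case: pselect => //= E [<-]; case: _ / E. Qed.

(* [lcov i p] is the largest element of [Li i] below [p] and [ucov p i] the
   least one above [p], [None] when there is none.  Since the [Li] meet in
   [0], a term below [0] of one [Li k] lies below [0] of all of them, which
   is what [collapse] records. *)
Fixpoint lcov (i : I) (p : term) : Li i :=
  match p with
  | LVar s => odflt \bot (coord i s)
  | LMeet p q => lcov i p `&` lcov i q
  | LJoin p q => lcov i p `|` lcov i q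
  end.

Definition cover := forall i, option (Li i).

Definition collapse (W : cover) : cover :=
  if pselect (exists k, W k = Some \bot) then fun=> Some \bot else W.

Fixpoint ucov (p : term) : cover :=
  match p with
  | LVar s => if projT2 s == \bot then fun=> Some \bot else coord^~ s
  | LMeet p q => collapse (fun k => omeet (ucov p k) (ucov q k))
  | LJoin p q => fun k => ojoin (ucov p k) (ucov q k)
  end.

Lemma collapse_le W i : ole (collapse W i) (W i).
Proof. by rewrite /collapse; case: (pselect _) => ?; rewrite ?ole0x ?ole_refl. Qed.

Lemma collapse0 W : (exists k, W k = Some \bot) -> forall k, collapse W k = Some \bot.
Proof. by rewrite /collapse; case: pselect. Qed.

Lemma collapse_eq0 W i : collapse W i = Some \bot -> exists k, W k = Some \bot.
Proof. by rewrite /collapse; case: (pselect _) => //= _ Wi; exists i. Qed.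

Lemma collapse_id W : ~ (exists k, W k = Some \bot) -> collapse W = W.
Proof. by rewrite /collapse; case: pselect. Qed.

Lemma ucovI_le p q k : ole (ucov (LMeet p q) k) (omeet (ucov p k) (ucov q k)).
Proof. exact: collapse_le. Qed.

Lemma ucov0 p i : ucov p i = Some \bot -> forall k, ucov p k = Some \bot.
Proof.
elim: p i => [s|p IHp q IHq|p IHp q IHq] i /=.
- by case: eqP => // s_neq0 /coord_Some s_eq; case: s_neq0; rewrite s_eq.
- by move/collapse_eq0/collapse0.
- case Ep: (ucov p i) => [x|] //; case Eq: (ucov q i) => [y|] //= [] /eqP.
  rewrite join_eq0 => /andP[/eqP x0 /eqP y0]; subst x y => k.
  by rewrite (IHp _ Ep k) (IHq _ Eq k) /= joinxx.
Qed.

Lemma lcov_atom i (x : Li i) : lcov i (LVar (existT _ i x)) = x.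
Proof. by rewrite /= coord_eq. Qed.

Lemma lcov_atom_neq i j (x : Li j) : j <> i -> lcov i (LVar (existT _ j x)) = \bot.
Proof. by move=> ji; rewrite /= coord_neq. Qed.

Lemma ucov_atom_le i (x : Li i) : ole (ucov (LVar (existT _ i x)) i) (Some x).
Proof. by rewrite /=; case: eqP => [->|_]; rewrite /= ?coord_eq /= ?le0x. Qed.

Definition below (p : term) (i : I) (u : Li i) :=
  lcov i p <= u /\ forall k, k <> i -> lcov k p = \bot.
Arguments below p i u : clear implicits.

Lemma below0_lcov p i : below p i \bot -> forall k, lcov k p = \bot.
Proof.
by move=> [pi0 p0] k; case: (pselect (k = i)) => [->|/p0//]; apply/eqP; rewrite -lex0.
Qed.

Lemma belowI p q i u v : below p i u -> below q i v -> below (LMeet p q) i (u `&` v).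
Proof. by move=> [pu p0] [qv _]; split=> [|k /p0 /= ->]; rewrite ?leI2 ?meet0x. Qed.

Lemma belowIl p q i u : below p i u -> below (LMeet p q) i u.
Proof. by move=> [pu p0]; split=> [|k /p0 /= ->]; rewrite ?meet0x // leIxl. Qed.

Lemma belowIr p q i u : below q i u -> below (LMeet p q) i u.
Proof. by move=> [qu q0]; split=> [|k /q0 /= ->]; rewrite ?meetx0 // leIxr. Qed.

Lemma belowU p q i u v : below p i u -> below q i v -> below (LJoin p q) i (u `|` v).
Proof. by move=> [pu p0] [qv q0]; split=> [|k ki /=]; rewrite ?leU2 ?p0 ?q0 ?joinxx. Qed.

Lemma below_omeet p q i z :
  (forall u, ucov p i = Some u -> below p i u) ->
  (forall v, ucov q i = Some v -> below q i v) ->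
  omeet (ucov p i) (ucov q i) = Some z -> below (LMeet p q) i z.
Proof.
move=> IHp IHq; case Ep: (ucov p i) => [u|]; case Eq: (ucov q i) => [v|] //= [<-].
- exact: belowI (IHp _ Ep) (IHq _ Eq).
- exact: belowIl (IHp _ Ep).
- exact: belowIr (IHq _ Eq).
Qed.

Lemma ucov_below p i u : ucov p i = Some u -> below p i u.
Proof.
elim: p i u => [s|p IHp q IHq|p IHp q IHq] i u /=.
- case: eqP => [s0 [<-]|_ /coord_Some ->]; last first.
    split=> [|k ki]; first by rewrite lcov_atom.
    by rewrite lcov_atom_neq //; apply: nesym.
  suff at0 k : lcov k (LVar s) = \bot by split=> [|k _]; rewrite at0.
  case: s s0 => j x /= ->.
  by case: (pselect (j = k)) => [<-|?]; rewrite ?coord_eq ?coord_neq.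
- case: (pselect (exists k, omeet (ucov p k) (ucov q k) = Some \bot)) => [[k0 W0]|noW].
    rewrite collapse0; last by exists k0.
    move=> [<-]; have /below0_lcov pq0 := below_omeet (IHp k0) (IHq k0) W0.
    by split=> [|k _]; rewrite pq0.
  by rewrite collapse_id //; apply: below_omeet; [apply: IHp|apply: IHq].
- case Ep: (ucov p i) => [a|]; case Eq: (ucov q i) => [b|] //= [<-].
  exact: belowU (IHp _ _ Ep) (IHq _ _ Eq).
Qed.

Lemma ucovI_id p q i : lcov i (LMeet p q) <> \bot ->
  ucov (LMeet p q) = fun k => omeet (ucov p k) (ucov q k).
Proof.
move=> pq_neq0; rewrite /= collapse_id // => -[k0 W0]; apply: pq_neq0.
by apply: (below0_lcov (below_omeet _ _ W0)) => *; apply: ucov_below.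
Qed.

Lemma lcov_le_ucov q i : ole (Some (lcov i q)) (ucov q i).
Proof.
elim: q i => [[j x]|p IHp q IHq|p IHp q IHq] i.
- case: (pselect (j = i)) => [<-|ji] /=; last by rewrite coord_neq //; apply: ole0x.
  by rewrite coord_eq /=; case: eqP => [->|_] /=; rewrite ?coord_eq /=.
- case: (pselect (lcov i (LMeet p q) = \bot)) => [->|/ucovI_id ->].
    exact: ole0x.
  exact: (oleI2 (IHp i) (IHq i)).
- exact: (oleU2 (IHp i) (IHq i)).
Qed.

Lemma ucov_None q i : lcov i q <> \bot -> forall k, k <> i -> ucov q k = None.
Proof.
elim: q i => [[j x]|p IHp q IHq|p IHp q IHq] i q_neq0 k ki.
- case: (pselect (j = i)) => [ji|ij]; last by rewrite lcov_atom_neq in q_neq0.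
  subst j; rewrite lcov_atom in q_neq0; rewrite /=.
  by case: eqP => // _; rewrite coord_neq // => ik; apply: ki.
- rewrite (ucovI_id q_neq0).
  have p_neq0 : lcov i p <> \bot by move=> p0; apply: q_neq0; rewrite /= p0 meet0x.
  have q'_neq0 : lcov i q <> \bot by move=> q0; apply: q_neq0; rewrite /= q0 meetx0.
  by rewrite (IHp _ p_neq0 _ ki) (IHq _ q'_neq0 _ ki).
- rewrite /=; case: (pselect (lcov i p = \bot)) => [p0|/IHp -> //].
  case: (pselect (lcov i q = \bot)) => [q0|/IHq -> //]; last exact: ojoinxN.
  by case: q_neq0; rewrite /= p0 q0 joinxx.
Qed.

End Covers.

Arguments atom {I d} Li.
Arguments cover {I d} Li.
Arguments below {I d Li} p i u.

Section TermOrder.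
Context {I : Type} {d : I -> Order.disp_t} {Li : forall i, bLatticeType (d i)}.
Local Notation term := (lterm (atom Li)).
Implicit Types p q r : term.

(* Whitman's conditions together with the rule [p <= a <= q] for [a] in some
   [Li i]; this is the order of the coproduct (Gratzer's description of free
   products of lattices). *)
Inductive tle : term -> term -> Prop :=
  | tle_cover p q i u : ucov p i = Some u -> u <= lcov i q -> tle p q
  | tle_joinl p0 p1 q : tle p0 q -> tle p1 q -> tle (LJoin p0 p1) q
  | tle_meetl0 p0 p1 q : tle p0 q -> tle (LMeet p0 p1) q
  | tle_meetl1 p0 p1 q : tle p1 q -> tle (LMeet p0 p1) q
  | tle_joinr0 p q0 q1 : tle p q0 -> tle p (LJoin q0 q1)
  | tle_joinr1 p q0 q1 : tle p q1 -> tle p (LJoin q0 q1)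
  | tle_meetr p q0 q1 : tle p q0 -> tle p q1 -> tle p (LMeet q0 q1).

Lemma tle_ucov p q i c : ole (ucov p i) (Some c) -> c <= lcov i q -> tle p q.
Proof. by move=> /oleS[x px xc] cq; apply: tle_cover px (le_trans xc cq). Qed.

Lemma tle_atom i (x y : Li i) :
  x <= y -> tle (LVar (existT _ i x)) (LVar (existT _ i y)).
Proof.
by move=> xy; apply: tle_ucov (ucov_atom_le x) _; rewrite lcov_atom.
Qed.

Lemma tle_refl p : tle p p.
Proof.
elim: p => [[j x]|p IHp q IHq|p IHp q IHq].
- exact: tle_atom.
- by apply: tle_meetr; [apply: tle_meetl0|apply: tle_meetl1].
- by apply: tle_joinl; [apply: tle_joinr0|apply: tle_joinr1].
Qed.

Lemma tleI2 p q p' q' : tle p p' -> tle q q' -> tle (LMeet p q) (LMeet p' q').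
Proof. by move=> pp' qq'; apply: tle_meetr; [apply: tle_meetl0|apply: tle_meetl1]. Qed.

Lemma tleU2 p q p' q' : tle p p' -> tle q q' -> tle (LJoin p q) (LJoin p' q').
Proof. by move=> pp' qq'; apply: tle_joinl; [apply: tle_joinr0|apply: tle_joinr1]. Qed.

Lemma ucov_glb p q0 q1 : (forall k, ole (ucov p k) (ucov q0 k)) ->
  (forall k, ole (ucov p k) (ucov q1 k)) -> forall i, ole (ucov p i) (ucov (LMeet q0 q1) i).
Proof.
move=> pq0 pq1 i; rewrite /=.
case: (pselect (exists k, omeet (ucov q0 k) (ucov q1 k) = Some \bot)) => [[k0 W0]|noW].
  have /olex0 p0 : ole (ucov p k0) (Some \bot) by rewrite -W0; apply: olexI.
  by rewrite (ucov0 p0 i) ole0x.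
by rewrite collapse_id //; apply: olexI.
Qed.

Lemma tle_cover_covers p q i u : ucov p i = Some u -> u <= lcov i q ->
  (forall k, lcov k p <= lcov k q) /\ (forall k, ole (ucov p k) (ucov q k)).
Proof.
move=> pu uq; have [pi p0] := ucov_below pu; split=> k.
  by case: (pselect (k = i)) => [->|/p0 ->]; rewrite ?le0x // (le_trans pi).
case: (pselect (lcov i q = \bot)) => [q0|q_neq0].
  have u0 : u = \bot by apply/eqP; rewrite -lex0 -q0.
  by subst u; rewrite (ucov0 pu k) ole0x.
case: (pselect (k = i)) => [->|ki]; last by rewrite (ucov_None q_neq0 ki); case: (ucov p k).
by rewrite pu; apply: ole_trans (lcov_le_ucov q i).
Qed.

Lemma tle_covers p q : tle p q ->
  (forall k, lcov k p <= lcov k q) /\ (forall k, ole (ucov p k) (ucov q k)).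
Proof.
elim=> {p q} [p q i u|p0 p1 q _ [l0 u0] _ [l1 u1]|p0 p1 q _ [l0 u0]|p0 p1 q _ [l0 u0]
            |p q0 q1 _ [l0 u0]|p q0 q1 _ [l0 u0]|p q0 q1 _ [l0 u0] _ [l1 u1]].
- exact: tle_cover_covers.
- by split=> k /=; [rewrite leUx l0 l1|apply: oleUx].
- split=> k; first by rewrite /= leIxl.
  by apply: ole_trans (ucovI_le _ _ _) (ole_trans (oleIl _ _) (u0 k)).
- split=> k; first by rewrite /= leIxr.
  by apply: ole_trans (ucovI_le _ _ _) (ole_trans (oleIr _ _) (u0 k)).
- by split=> k; [apply: le_trans (l0 k) (leUl _ _)|apply: ole_trans (u0 k) (oleUl _ _)].
- by split=> k; [apply: le_trans (l0 k) (leUr _ _)|apply: ole_trans (u0 k) (oleUr _ _)].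
- by split=> k; [rewrite /= lexI l0 l1|apply: ucov_glb].
Qed.

Lemma tle_joinlP p0 p1 r : tle (LJoin p0 p1) r -> tle p0 r /\ tle p1 r.
Proof.
move E: (LJoin p0 p1) => p pr; elim: pr p0 p1 E => {p r}.
- move=> p r i u + ur p0 p1 pE; rewrite -pE /=.
  case E0: (ucov p0 i) => [a|]; case E1: (ucov p1 i) => [b|] //= [ab].
  split; [apply: tle_cover E0 _|apply: tle_cover E1 _];
    by apply: le_trans ur; rewrite -ab ?leUl ?leUr.
- by move=> ? ? r h0 _ h1 _ ? ? [-> ->].
- by move=> *; discriminate.
- by move=> *; discriminate.
- by move=> ? ? ? _ IH ? ? /IH[]; split; apply: tle_joinr0.
- by move=> ? ? ? _ IH ? ? /IH[]; split; apply: tle_joinr1.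
- move=> ? ? ? _ IH0 _ IH1 ? ? E.
  by have [? ?] := IH0 _ _ E; have [? ?] := IH1 _ _ E; split; apply: tle_meetr.
Qed.

Lemma tle_meet_trans p q0 q1 r : tle p q0 -> tle p q1 ->
  (forall r, tle q0 r -> tle p r) -> (forall r, tle q1 r -> tle p r) ->
  tle (LMeet q0 q1) r -> tle p r.
Proof.
move=> pq0 pq1 IH0 IH1; have [_ pq] := tle_covers (tle_meetr pq0 pq1).
move E: (LMeet q0 q1) pq => q pq qr; elim: qr E pq => {q r}.
- by move=> q r i u qu ur _ pq; apply: (tle_ucov (c := u)) ur; rewrite -qu.
- by move=> *; discriminate.
- by move=> q0' q1' r h _ [E0 _] _; apply: IH0; rewrite E0.
- by move=> q0' q1' r h _ [_ E1] _; apply: IH1; rewrite E1.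
- by move=> q r0 r1 _ IH E pq; apply: tle_joinr0; apply: IH E pq.
- by move=> q r0 r1 _ IH E pq; apply: tle_joinr1; apply: IH E pq.
- move=> q r0 r1 _ IHa _ IHb E pq.
  by apply: tle_meetr; [apply: IHa E pq|apply: IHb E pq].
Qed.

Lemma tle_trans p q r : tle p q -> tle q r -> tle p r.
Proof.
move=> pq; elim: pq r => {p q} [p q i u pu uq|p0 p1 q _ IH0 _ IH1|p0 p1 q _ IH|p0 p1 q _ IH
  |p q0 q1 _ IH|p q0 q1 _ IH|p q0 q1 pq0 IH0 pq1 IH1] r qr.
- by have [lq _] := tle_covers qr; apply: tle_cover pu (le_trans uq (lq i)).
- by apply: tle_joinl; [apply: IH0|apply: IH1].
- by apply: tle_meetl0; apply: IH.
- by apply: tle_meetl1; apply: IH.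
- by apply: IH; case: (tle_joinlP qr).
- by apply: IH; case: (tle_joinlP qr).
- exact: tle_meet_trans qr.
Qed.

Lemma tle_meetrP p q0 q1 : tle p (LMeet q0 q1) -> tle p q0 /\ tle p q1.
Proof.
by move=> pq; split; apply: tle_trans pq _; [apply: tle_meetl0|apply: tle_meetl1];
  apply: tle_refl.
Qed.

Definition cover_le p q := exists i, ole (ucov p i) (Some (lcov i q)).

Lemma tle_meetlP p0 p1 r : tle (LMeet p0 p1) r ->
  [\/ cover_le (LMeet p0 p1) r, tle p0 r \/ tle p1 r, exists r0 r1, r = LMeet r0 r1
     | exists r0 r1, r = LJoin r0 r1 /\ (tle (LMeet p0 p1) r0 \/ tle (LMeet p0 p1) r1)].
Proof.
move E: (LMeet p0 p1) => p pr; case: pr E => {p r}.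
- by move=> p r i u pu ur _; apply: Or41; exists i; rewrite pu.
- by move=> *; discriminate.
- by move=> q0 q1 r h [-> _]; apply: Or42; left.
- by move=> q0 q1 r h [_ ->]; apply: Or42; right.
- by move=> p r0 r1 h _; apply: Or44; exists r0, r1; split=> //; left.
- by move=> p r0 r1 h _; apply: Or44; exists r0, r1; split=> //; right.
- by move=> p r0 r1 _ _ _; apply: Or43; exists r0, r1.
Qed.

End TermOrder.

Section Soundness.
Context {I : Type} {d : I -> Order.disp_t} {Li : forall i, bLatticeType (d i)}.
Context {dM : Order.disp_t} {M : bLatticeType dM} (f : forall i, Li i -> M).
Arguments f : clear implicits.
Hypothesis f_hom : forall i : I, zlat_hom (f i).
Local Notation term := (lterm (atom Li)).
Implicit Types p q : term.

Definition teval p : M := leval (fun s => f (projT1 s) (projT2 s)) p.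

Lemma tevalI p q : teval (LMeet p q) = teval p `&` teval q.
Proof. by []. Qed.

Lemma tevalU p q : teval (LJoin p q) = teval p `|` teval q.
Proof. by []. Qed.

Lemma teval_le_omeet p q i z :
  (forall u, ucov p i = Some u -> teval p <= f i u) ->
  (forall v, ucov q i = Some v -> teval q <= f i v) ->
  omeet (ucov p i) (ucov q i) = Some z -> teval (LMeet p q) <= f i z.
Proof.
move=> IHp IHq; case Ep: (ucov p i) => [u|]; case Eq: (ucov q i) => [v|] //= [<-].
- by rewrite tevalI (zlat_homI (f_hom _)) leI2 ?IHp ?IHq.
- by rewrite tevalI leIxl ?IHp.
- by rewrite tevalI leIxr ?IHq.
Qed.

Lemma teval_le_ucov p i u : ucov p i = Some u -> teval p <= f i u.
Proof.
elim: p i u => [s|p IHp q IHq|p IHp q IHq] i u /=.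
- case: ifP => [/eqP s0 _|_ su]; last by rewrite (coord_Some su) /teval /=.
  by rewrite /teval /= s0 (zlat_hom0 (f_hom _)) le0x.
- case: (pselect (exists k, omeet (ucov p k) (ucov q k) = Some \bot)) => [[k0 W0]|noW].
    move=> _; apply: le_trans (le0x (f i u)).
    by rewrite -(zlat_hom0 (f_hom k0)); apply: teval_le_omeet W0; [apply: IHp|apply: IHq].
  by rewrite collapse_id //; apply: teval_le_omeet; [apply: IHp|apply: IHq].
- case Ep: (ucov p i) => [a|]; case Eq: (ucov q i) => [b|] //= [<-].
  by rewrite tevalU (zlat_homU (f_hom _)) leU2 ?IHp ?IHq.
Qed.

Lemma lcov_le_teval p i : f i (lcov i p) <= teval p.
Proof.
elim: p => [[j x]|p IHp q IHq|p IHp q IHq].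
- case: (pselect (j = i)) => [<-|ji]; first by rewrite lcov_atom.
  by rewrite lcov_atom_neq // (zlat_hom0 (f_hom _)) le0x.
- by rewrite tevalI /= (zlat_homI (f_hom _)) leI2.
- by rewrite tevalU /= (zlat_homU (f_hom _)) leU2.
Qed.

Lemma tle_teval p q : tle p q -> teval p <= teval q.
Proof.
elim=> {p q}.
- move=> p q i u pu uq; apply: le_trans (teval_le_ucov pu) _.
  exact: le_trans (zlat_hom_homo (f_hom i) uq) (lcov_le_teval q i).
- by move=> p0 p1 q _ h0 _ h1; rewrite tevalU leUx h0 h1.
- by move=> p0 p1 q _ h; rewrite tevalI leIxl.
- by move=> p0 p1 q _ h; rewrite tevalI leIxr.
- by move=> p q0 q1 _ h; rewrite tevalU lexUl.
- by move=> p q0 q1 _ h; rewrite tevalU lexUr.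
- by move=> p q0 q1 _ h0 _ h1; rewrite tevalI lexI h0 h1.
Qed.

End Soundness.

Section TermModel.
Context {I : Type} {d : I -> Order.disp_t} {Li : forall i, bLatticeType (d i)}.
Local Notation term := (lterm (atom Li)).
Implicit Types (s t : term).

Definition tdown t : term -> Prop := tle^~ t.

Definition tquot := {P : term -> Prop | exists t, P = tdown t}.

(* The lattice structure is built on a copy of [tquot] indexed by a point of
   [I], which provides the bottom element [0] of [Li i0]. *)
Definition tmodel (i0 : I) : Type := tquot.

Definition tclass t : tquot := exist _ (tdown t) (ex_intro _ t erefl).

Definition trep (P : tquot) : term := projT1 (cid (proj2_sig P)).

Lemma trep_spec P : sval P = tdown (trep P).
Proof. by rewrite /trep; case: cid. Qed.

Lemma tclass_trep P : tclass (trep P) = P.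
Proof. by case: P => P PP; apply: eq_exist; rewrite -(trep_spec (exist _ P PP)). Qed.

Lemma tclass_eq s t : tle s t -> tle t s -> tclass s = tclass t.
Proof.
move=> st ts; apply: eq_exist; apply: funext => r; apply: propext.
by split=> ?; [apply: tle_trans st|apply: tle_trans ts].
Qed.

Lemma tle_trep t : tle t (trep (tclass t)) /\ tle (trep (tclass t)) t.
Proof.
have tE : tdown t = tdown (trep (tclass t)) := trep_spec (tclass t).
split; [rewrite -[tle t _]/(tdown _ t) -tE|rewrite -[tle _ t]/(tdown t _) tE];
  exact: tle_refl.
Qed.

Definition tquot_le (P Q : tquot) : bool := `[< forall s, sval P s -> sval Q s >].

Lemma tquot_le_class s t : tquot_le (tclass s) (tclass t) <-> tle s t.
Proof.
split=> [/asboolP st|st]; first by apply: st; apply: tle_refl.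
by apply/asboolP => r rs; apply: tle_trans rs st.
Qed.

Section Lattice.
Variable i0 : I.
Local Notation M := (tmodel i0).

Lemma tquot_le_refl : reflexive (tquot_le : rel M).
Proof. by move=> P; apply/asboolP. Qed.

Lemma tquot_le_anti : antisymmetric (tquot_le : rel M).
Proof.
move=> [P PP] [Q QQ] /andP[/asboolP /= PQ /asboolP /= QP]; apply: eq_exist.
by apply: funext => r; apply: propext; split=> [/PQ|/QP].
Qed.

Lemma tquot_le_trans : transitive (tquot_le : rel M).
Proof. by move=> Q P R /asboolP PQ /asboolP QR; apply/asboolP => s /PQ /QR. Qed.

HB.instance Definition _ := gen_eqMixin M.
HB.instance Definition _ := gen_choiceMixin M.

Fact tmodel_display : Order.disp_t. Proof. exact: Order.Disp tt tt. Qed.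

HB.instance Definition _ := Order.Le_isPOrder.Build tmodel_display M
  tquot_le_refl tquot_le_anti tquot_le_trans.

Definition tmeet (P Q : M) : M := tclass (LMeet (trep P) (trep Q)).
Definition tjoin (P Q : M) : M := tclass (LJoin (trep P) (trep Q)).

Lemma tmeet_class s t : tmeet (tclass s) (tclass t) = tclass (LMeet s t).
Proof.
by have [? ?] := tle_trep s; have [? ?] := tle_trep t; apply: tclass_eq; apply: tleI2.
Qed.

Lemma tjoin_class s t : tjoin (tclass s) (tclass t) = tclass (LJoin s t).
Proof.
by have [? ?] := tle_trep s; have [? ?] := tle_trep t; apply: tclass_eq; apply: tleU2.
Qed.

Lemma tmeetP (P Q R : M) : (P <= tmeet Q R) = (P <= Q) && (P <= R).
Proof.
rewrite -(tclass_trep P) -(tclass_trep Q) -(tclass_trep R) tmeet_class.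
apply/idP/andP=> [/tquot_le_class PQR|[/tquot_le_class PQ /tquot_le_class PR]].
  by split; apply/tquot_le_class; apply: tle_trans PQR _;
    [apply: tle_meetl0|apply: tle_meetl1]; apply: tle_refl.
by apply/tquot_le_class; apply: tle_meetr.
Qed.

Lemma tjoinP (P Q R : M) : (tjoin P Q <= R) = (P <= R) && (Q <= R).
Proof.
rewrite -(tclass_trep P) -(tclass_trep Q) -(tclass_trep R) tjoin_class.
apply/idP/andP=> [/tquot_le_class PQR|[/tquot_le_class PR /tquot_le_class QR]].
  by split; apply/tquot_le_class; apply: tle_trans _ PQR;
    [apply: tle_joinr0|apply: tle_joinr1]; apply: tle_refl.
by apply/tquot_le_class; apply: tle_joinl.
Qed.

HB.instance Definition _ :=
  Order.POrder_MeetJoin_isLattice.Build tmodel_display M tmeetP tjoinP.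

Lemma tclassI s t : (tclass s : M) `&` tclass t = tclass (LMeet s t).
Proof. exact: tmeet_class. Qed.

Lemma tclassU s t : (tclass s : M) `|` tclass t = tclass (LJoin s t).
Proof. exact: tjoin_class. Qed.

Lemma tle_atom0 i t : tle (LVar (existT _ i (\bot : Li i))) t.
Proof. by apply: (tle_ucov (i := i) (c := \bot)); rewrite ?le0x //= eqxx. Qed.

Definition tbot : M := tclass (LVar (existT _ i0 (\bot : Li i0))).

Lemma tbot_le (P : M) : tbot <= P.
Proof. by rewrite -(tclass_trep P); apply/tquot_le_class; apply: tle_atom0. Qed.

HB.instance Definition _ := Order.hasBottom.Build tmodel_display M tbot_le.

End Lattice.
End TermModel.

Arguments tmodel {I d} Li i0.

Section Coproduct.
Context {I : Type} {d : I -> Order.disp_t} {Li : forall i, bLatticeType (d i)}.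
Context {dL : Order.disp_t} {L : bLatticeType dL} (e : forall i, Li i -> L).
Arguments e : clear implicits.
Hypothesis e_coprod : is_coproduct0 Li L e.
Variable i0 : I.
Local Notation term := (lterm (atom Li)).
Local Notation M := (tmodel Li i0).

Lemma coprod_endo_id (g : L -> L) :
  zlat_hom g -> (forall i x, g (e i x) = e i x) -> forall y, g y = y.
Proof.
move=> g_hom ge y; have [e_hom /(_ _ L e e_hom)[h [_ [_ h_uniq]]]] := e_coprod.
by rewrite (h_uniq g g_hom ge y) -(h_uniq id zlat_hom_id (fun _ _ => erefl) y).
Qed.

Definition tatom i (x : Li i) : M := tclass (LVar (existT _ i x)).
Arguments tatom : clear implicits.

Lemma tatom_hom i : zlat_hom (tatom i).
Proof.
split; last split.
- by apply: tclass_eq; apply: tle_atom0.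
- move=> x y; rewrite /tatom tclassI.
  apply: tclass_eq; first by apply: tle_meetr; apply: tle_atom; rewrite ?leIl ?leIr.
  apply: (tle_ucov (i := i) (c := x `&` y)); last by rewrite lcov_atom.
  exact: ole_trans (ucovI_le _ _ _) (oleI2 (ucov_atom_le x) (ucov_atom_le y)).
- move=> x y; rewrite /tatom tclassU.
  apply: tclass_eq; last by apply: tle_joinl; apply: tle_atom; rewrite ?leUl ?leUr.
  by apply: (tle_ucov (ucov_atom_le (x `|` y))); rewrite /= !coord_eq.
Qed.

Definition tmodel_eval (P : M) : L := teval e (trep P).

Lemma teval_trep t : teval e (trep (tclass t)) = teval e t.
Proof.
have [? ?] := tle_trep t; apply: le_anti.
by rewrite !tle_teval //; apply: (proj1 e_coprod).
Qed.

Lemma tmodel_eval_hom : zlat_hom tmodel_eval.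
Proof.
have [e0 _] := proj1 e_coprod i0.
split; last split.
- by rewrite /tmodel_eval teval_trep /teval /= e0.
- by move=> P Q; rewrite /tmodel_eval -[_ `&` _]/(tmeet _ _) teval_trep.
- by move=> P Q; rewrite /tmodel_eval -[_ `|` _]/(tjoin _ _) teval_trep.
Qed.

Lemma tmodel_factor : exists2 h : L -> M, zlat_hom h & forall t, h (teval e t) = tclass t.
Proof.
have [h [h_hom [he _]]] := proj2 e_coprod _ M tatom tatom_hom.
exists h => // t; elim: t => [[i x]|p IHp q IHq|p IHp q IHq].
- exact: he.
- by rewrite tevalI (zlat_homI h_hom) IHp IHq tclassI.
- by rewrite tevalU (zlat_homU h_hom) IHp IHq tclassU.
Qed.

Lemma teval_reflect s t : teval e s <= teval e t -> tle s t.
Proof.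
have [h h_hom h_teval] := tmodel_factor.
by move/(zlat_hom_homo h_hom); rewrite !h_teval => /tquot_le_class.
Qed.

Lemma teval_onto y : exists t, y = teval e t.
Proof.
have [h h_hom h_teval] := tmodel_factor; exists (trep (h y)).
apply/esym/(coprod_endo_id (g := tmodel_eval \o h)).
  exact: zlat_hom_comp h_hom tmodel_eval_hom.
move=> i x; rewrite /= -[e i x]/(teval e (LVar (existT _ i x))) h_teval.
by rewrite /tmodel_eval teval_trep.
Qed.

End Coproduct.

Fixpoint var_in {V : Type} (v : V) (p : lterm V) : Prop :=
  match p with
  | LVar w => w = v
  | LMeet p q | LJoin p q => var_in v p \/ var_in v q
  end.

Lemma var_in_exists {V : Type} (p : lterm V) : exists v, var_in v p.
Proof. by elim: p => [v|p [v pv] q _|p [v pv] q _]; exists v; rewrite /=; tauto. Qed.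

Section Directed.
Context {dA : Order.disp_t} {Lam : porderType dA}.
Hypothesis Lam_dir : up_directed (fun l m : Lam => l <= m) (fun _ => True).

Lemma directed_ub (l1 l2 : Lam) : exists2 m, l1 <= m & l2 <= m.
Proof. by have [m [_ [l1m l2m]]] := proj2 Lam_dir l1 l2 I I; exists m. Qed.

Definition downclosed (P : Lam -> Prop) := forall l m, l <= m -> P m -> P l.

Lemma downclosedU P Q : downclosed P -> downclosed Q -> downclosed (fun l => P l \/ Q l).
Proof. by move=> dP dQ l m lm [/(dP _ _ lm)|/(dQ _ _ lm)]; [left|right]. Qed.

Lemma downclosed_cover2 P Q : downclosed P -> downclosed Q ->
  (forall l, P l \/ Q l) -> (forall l, P l) \/ (forall l, Q l).
Proof.
move=> dP dQ PQ; case: (pselect (forall l, P l)) => [|/existsNP[l1 nPl1]]; first by left.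
right=> l; have [m l1m lm] := directed_ub l1 l.
by case: (PQ m) => [/(dP _ _ l1m)|/(dQ _ _ lm)].
Qed.

Lemma downclosed_cover_vars {V : Type} (p : lterm V) (P : V -> Lam -> Prop) :
  (forall v, downclosed (P v)) -> (forall l, exists2 v, var_in v p & P v l) ->
  exists2 v, var_in v p & forall l, P v l.
Proof.
move=> dP; elim: p => [w|p IHp q IHq|p IHp q IHq] Pl /=.
  by exists w => // l; have [v <-] := Pl l.
all: have dvars r : downclosed (fun l => exists2 v, var_in v r & P v l)
  by move=> l m lm [v rv /(dP v _ _ lm) Pvl]; exists v.
all: have pq_cover l : (exists2 v, var_in v p & P v l) \/ (exists2 v, var_in v q & P v l)
  by have [v [pv|qv] Pvl] := Pl l; [left|right]; exists v.
all: case: (downclosed_cover2 (dvars p) (dvars q) pq_cover) => [/IHp|/IHq] [v rv Pv].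
all: by exists v; tauto.
Qed.

Lemma range_directed {dM} {M : latticeType dM} (x : Lam -> M) :
  {homo x : l m / l <= m} -> up_directed (fun u v => u <= v) (fun z => exists l, z = x l).
Proof.
move=> x_homo; split; first by have [l _] := proj1 Lam_dir; exists (x l), l.
move=> _ _ [l1 ->] [l2 ->]; have [m l1m l2m] := directed_ub l1 l2.
by exists (x m); split; [exists m|rewrite !x_homo].
Qed.

Lemma upper_continuous_meet_le {dM} {M : latticeType dM} (x y : Lam -> M) (xs ys c : M) :
  upper_continuous M -> {homo x : l m / l <= m} -> {homo y : l m / l <= m} ->
  is_lub (fun u v => u <= v) (fun z => exists l, z = x l) xs ->
  is_lub (fun u v => u <= v) (fun z => exists l, z = y l) ys ->
  (forall l, x l `&` y l <= c) -> xs `&` ys <= c.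
Proof.
move=> uc x_homo y_homo xs_lub ys_lub xyc.
apply: (proj2 (uc xs _ ys (range_directed y_homo) ys_lub)) => _ [_ [[l ->] ->]].
rewrite meetC; apply: (proj2 (uc (y l) _ xs (range_directed x_homo) xs_lub)).
move=> _ [_ [[l' ->] ->]]; have [m lm l'm] := directed_ub l l'.
by rewrite meetC; apply: le_trans (xyc m); rewrite leI2 ?x_homo ?y_homo.
Qed.

Section OptionLimits.
Context {dX : Order.disp_t} {X : bLatticeType dX}.
Implicit Types (F G : Lam -> option X) (s t : option X).

(* Limits in [option X] with [None] as top: a least upper bound in [X], or
   [None] once the net reaches [None]. *)
Definition olim F s : Prop :=
  if s is Some x then (forall l, ole (F l) (Some x)) /\
                      (forall c, (forall l, ole (F l) (Some c)) -> x <= c)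
  else exists l, F l = None.

Definition ohomo F := forall l m, l <= m -> ole (F l) (F m).

Lemma olim_le F s c : olim F s -> (forall l, ole (F l) (Some c)) -> ole s (Some c).
Proof. by case: s => [x [_ /[apply]]|[l Fl] /(_ l)]; rewrite ?Fl. Qed.

Lemma ohomo_None F l m : ohomo F -> l <= m -> F l = None -> F m = None.
Proof. by move=> F_homo lm Fl; apply: oleNx; rewrite -Fl F_homo. Qed.

Lemma olim_Some F x : ohomo F -> olim F (Some x) ->
  exists2 f : Lam -> X, (forall l, F l = Some (f l)) &
    {homo f : l m / l <= m} /\ is_lub (fun u v => u <= v) (fun z => exists l, z = f l) x.
Proof.
move=> F_homo [Fx x_least]; exists (fun l => odflt x (F l)).
  by move=> l; have [? -> _] := oleS (Fx l).
split=> [l m lm|]; first by have := F_homo _ _ lm; have := Fx m; case: (F m); case: (F l).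
split=> [_ [l ->]|u ub]; first by have := Fx l; case: (F l).
by apply: x_least => l; have := Fx l; have := ub _ (ex_intro _ l erefl); case: (F l).
Qed.

Lemma olim_tail F G s l0 : ohomo F -> (forall l, ole (G l) (F l)) ->
  (forall m, l0 <= m -> G m = F m) -> olim F s -> olim G s.
Proof.
move=> F_homo GF GF_tail; case: s => [x [Fx x_least]|[l Fl]].
  split=> [l|c Gc]; first exact: ole_trans (GF l) (Fx l).
  apply: x_least => l; have [m lm l0m] := directed_ub l l0.
  by apply: ole_trans (F_homo _ _ lm) _; rewrite -GF_tail.
have [m lm l0m] := directed_ub l l0.
by exists m; rewrite GF_tail // (ohomo_None F_homo lm).
Qed.

Lemma olimU F G s t : olim F s -> olim G t ->
  olim (fun l => ojoin (F l) (G l)) (ojoin s t).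
Proof.
case: s => [x [Fx x_least]|[l Fl]]; last by exists l; rewrite Fl.
case: t => [y [Gy y_least]|[l Gl]]; last by exists l; rewrite Gl ojoinxN.
split=> [l|c FGc]; first exact: oleU2 (Fx l) (Gy l).
rewrite leUx x_least ?y_least // => l; apply: ole_trans (FGc l).
  exact: oleUr.
exact: oleUl.
Qed.

Lemma olimI F G s t : upper_continuous X -> ohomo F -> ohomo G ->
  olim F s -> olim G t -> olim (fun l => omeet (F l) (G l)) (omeet s t).
Proof.
move=> uc F_homo G_homo Fs Gt.
case: s Fs => [x|] Fs; case: t Gt => [y|] Gt.
- have [f Ff [f_homo f_lub]] := olim_Some F_homo Fs.
  have [g Gg [g_homo g_lub]] := olim_Some G_homo Gt.
  split=> [l|c FGc].
    by rewrite Ff Gg; apply: leI2; [apply: (proj1 f_lub)|apply: (proj1 g_lub)]; exists l.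
  by apply: upper_continuous_meet_le uc f_homo g_homo f_lub g_lub _ => l;
    have := FGc l; rewrite Ff Gg.
- have [l0 Gl0] := Gt; apply: (olim_tail (l0 := l0)) F_homo (fun l => oleIl _ _) _ Fs.
  by move=> m l0m; rewrite (ohomo_None G_homo l0m Gl0) omeetxN.
- have [l0 Fl0] := Fs; apply: (olim_tail (l0 := l0)) G_homo (fun l => oleIr _ _) _ Gt.
  by move=> m l0m; rewrite (ohomo_None F_homo l0m Fl0).
- have [[l1 Fl1] [l2 Gl2]] := (Fs, Gt); have [m l1m l2m] := directed_ub l1 l2.
  by exists m; rewrite (ohomo_None F_homo l1m Fl1) (ohomo_None G_homo l2m Gl2).
Qed.

End OptionLimits.

End Directed.

Section Instances.
Context {I : Type} {d : I -> Order.disp_t} {Li : forall i, bLatticeType (d i)}.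
Local Notation term := (lterm (atom Li)).
Implicit Types (b : forall i, nat -> Li i) (p q : lterm (I * nat)).

Fixpoint inst b p : term :=
  match p with
  | LVar v => LVar (existT _ v.1 (b v.1 v.2))
  | LMeet p q => LMeet (inst b p) (inst b q)
  | LJoin p q => LJoin (inst b p) (inst b q)
  end.

Lemma teval_inst {dL} {L : bLatticeType dL} (e : forall i, Li i -> L) b p :
  leval (fun v => e v.1 (b v.1 v.2)) p = teval e (inst b p).
Proof. by elim: p => [v|p IHp q IHq|p IHp q IHq] //=; rewrite IHp IHq. Qed.

Lemma tle_inst b b' p : (forall i n, b i n <= b' i n) -> tle (inst b p) (inst b' p).
Proof.
move=> bb'; elim: p => [[i n]|p IHp q IHq|p IHp q IHq] /=; last exact: tleU2.
  exact: tle_atom.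
exact: tleI2.
Qed.

Lemma ucov_inst_var b j n i : ucov (inst b (LVar (j, n))) i =
  if b j n == \bot then Some \bot else coord i (existT _ j (b j n)).
Proof. by rewrite /=; case: eqP. Qed.

Lemma ucov_inst_index b p i x : ucov (inst b p) i = Some x ->
  x = \bot \/ exists n, var_in (i, n) p.
Proof.
elim: p i x => [[j n]|p IHp q IHq|p IHp q IHq] i x.
- rewrite ucov_inst_var; case: eqP => [_ [<-]|_ bi]; first by left.
  by right; exists n; rewrite /= (coord_Some_index bi).
- rewrite /= /collapse; case: (pselect _) => [_ [<-]|_ /=]; first by left.
  case Ep: (ucov (inst b p) i) => [u|]; case Eq: (ucov (inst b q) i) => [v|] //= [<-].
  + case: (IHp _ _ Ep) => [->|[m pm]]; first by rewrite meet0x; left.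
    by right; exists m; left.
  + by case: (IHp _ _ Ep) => [->|[m pm]]; [left|right; exists m; left].
  + by case: (IHq _ _ Eq) => [->|[m qm]]; [left|right; exists m; right].
- rewrite /=; case Ep: (ucov (inst b p) i) => [u|];
    case Eq: (ucov (inst b q) i) => [v|] //= [<-].
  case: (IHp _ _ Ep) => [->|[m pm]]; last by right; exists m; left.
  case: (IHq _ _ Eq) => [->|[m qm]]; last by right; exists m; right.
  by left; rewrite joinxx.
Qed.

Lemma cover_le_inst_index b p u : cover_le (inst b p) u ->
  exists2 v, var_in v p & ole (ucov (inst b p) v.1) (Some (lcov v.1 u)).
Proof.
case=> i /oleS[x px xu]; case: (ucov_inst_index px) => [x0|[n pn]].
  have [v pv] := var_in_exists p; exists v => //.
  by rewrite (ucov0 (i := i) _ v.1) ?ole0x // px x0.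
by exists (i, n) => //; rewrite px.
Qed.

Lemma omeet_inst_index b p q k :
  omeet (ucov (inst b p) k) (ucov (inst b q) k) = Some \bot ->
  exists2 k', (exists n, var_in (k', n) (LMeet p q)) &
    omeet (ucov (inst b p) k') (ucov (inst b q) k') = Some \bot.
Proof.
move=> pq_zero.
have [[kp np] pv] := var_in_exists p; have [[kq nq] qv] := var_in_exists q.
case: (pselect (ucov (inst b p) k = Some \bot)) => [pk|p_nz].
  by exists kp; [exists np; left|rewrite (ucov0 pk) omeet0x].
case: (pselect (ucov (inst b q) k = Some \bot)) => [qk|q_nz].
  by exists kq; [exists nq; right|rewrite (ucov0 qk) omeetx0].
exists k => //; move: pq_zero p_nz q_nz.
case Ep: (ucov (inst b p) k) => [u|]; case Eq: (ucov (inst b q) k) => [v|] //= _.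
case: (ucov_inst_index Ep) => [u0|[n pn] _ _]; last by exists n; left.
by rewrite u0 => /(_ erefl).
Qed.

End Instances.

Section CollapseLimit.
Context {I : Type} {d : I -> Order.disp_t} {Li : forall i, bLatticeType (d i)}.
Context {dA : Order.disp_t} {Lam : porderType dA}.
Hypothesis Lam_dir : up_directed (fun l m : Lam => l <= m) (fun _ => True).

Lemma olim_collapse (W : Lam -> cover Li) (Wa : cover Li) i :
  (forall k, ohomo (fun l => W l k)) -> (forall k, olim (fun l => W l k) (Wa k)) ->
  ((forall l, exists k, W l k = Some \bot) -> exists k, forall l, W l k = Some \bot) ->
  olim (fun l => collapse (W l) i) (collapse Wa i).
Proof.
move=> W_homo W_lim W_fin.
case: (pselect (exists k, Wa k = Some \bot)) => [[k Wak]|noWa].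
  rewrite collapse0; last by exists k.
  split=> [l|c _]; last exact: le0x.
  have [Wk0 _] : olim (fun l => W l k) (Some \bot) by rewrite -Wak.
  by rewrite collapse0 ?ole_refl //; exists k; apply: olex0 (Wk0 l).
rewrite collapse_id //.
have [l0 nWl0] : exists l0, ~ exists k, W l0 k = Some \bot.
  apply/existsNP => /W_fin[k Wk]; apply: noWa; exists k; apply: olex0.
  by apply: olim_le (W_lim k) _ => l; rewrite Wk ole_refl.
apply: (olim_tail Lam_dir (l0 := l0) (W_homo i) (fun l => collapse_le (W l) i) _ (W_lim i)).
move=> m l0m; rewrite collapse_id // => -[k Wmk]; apply: nWl0; exists k.
by apply: olex0; rewrite -Wmk W_homo.
Qed.

End CollapseLimit.

Section DirectedSup.
Context {I : Type} {d : I -> Order.disp_t} {Li : forall i, bLatticeType (d i)}.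
Hypothesis Li_uc : forall i, upper_continuous (Li i).
Context {dA : Order.disp_t} {Lam : porderType dA}.
Hypothesis Lam_dir : up_directed (fun l m : Lam => l <= m) (fun _ => True).
Variables (al : Lam -> forall i, nat -> Li i) (a : forall i, nat -> Li i).
Hypothesis al_homo : forall l m, l <= m -> forall i n, al l i n <= al m i n.
Hypothesis a_lub : is_lub (fun x y : forall i n, Li i => forall i n, x i n <= y i n)
  (fun x => exists l, x = al l) a.
Local Notation term := (lterm (atom Li)).
Implicit Types (p q : lterm (I * nat)) (u : term).

Lemma al_le_a l i n : al l i n <= a i n.
Proof. exact: (proj1 a_lub _ (ex_intro _ l erefl)). Qed.

Lemma a_least i n c : (forall l, al l i n <= c) -> a i n <= c.
Proof.
move=> alc.
(* [b] is [a] with its [(i, n)] coordinate replaced by [c]. *)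
pose b j m : Li j :=
  if pselect (i = j) is left E then (if m == n then eq_rect i Li c j E else a j m) else a j m.
have : forall j m, a j m <= b j m.
  apply: (proj2 a_lub) => _ [l ->] j m; rewrite /b; case: pselect => [E|_]; last exact: al_le_a.
  by case: _ / E => /=; case: eqP => [->|_]; [apply: alc|apply: al_le_a].
by move/(_ i n); rewrite /b; case: pselect => // E; rewrite (Prop_irrelevance E erefl) eqxx.
Qed.

Lemma a_neq0 i n : a i n <> \bot -> exists l, al l i n <> \bot.
Proof.
move=> an0; apply/existsNP => al0; apply: an0; apply/eqP; rewrite -lex0.
by apply: a_least => l; rewrite al0.
Qed.

Lemma tle_inst_homo l m p : l <= m -> tle (inst (al l) p) (inst (al m) p).
Proof. by move=> lm; apply: tle_inst => i n; apply: al_homo. Qed.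

Lemma tle_inst_sup l p : tle (inst (al l) p) (inst a p).
Proof. by apply: tle_inst => i n; apply: al_le_a. Qed.

Lemma ucov_inst_homo p i : ohomo (fun l => ucov (inst (al l) p) i).
Proof. by move=> l m /(tle_inst_homo p)/tle_covers[_]. Qed.

Lemma ucov_inst_sup l p i : ole (ucov (inst (al l) p) i) (ucov (inst a p) i).
Proof. by have [_] := tle_covers (tle_inst_sup l p). Qed.

Lemma ucov_inst_lim_var j n i :
  olim (fun l => ucov (inst (al l) (LVar (j, n))) i) (ucov (inst a (LVar (j, n))) i).
Proof.
have ub l := ucov_inst_sup l (LVar (j, n)) i.
case: (pselect (a j n = \bot)) => [a0|an0].
  have ua : ucov (inst a (LVar (j, n))) i = Some \bot by rewrite ucov_inst_var a0 eqxx.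
  by rewrite ua in ub *; split=> [|c _]; last exact: le0x.
case: (pselect (j = i)) => [ji|ij].
  subst j; have ua : ucov (inst a (LVar (i, n))) i = Some (a i n).
    by rewrite ucov_inst_var coord_eq; case: eqP.
  rewrite ua in ub *; split=> // c alc; apply: a_least => l; have := alc l.
  by rewrite ucov_inst_var coord_eq; case: eqP => [->|_]; rewrite ?le0x.
rewrite ucov_inst_var coord_neq //; case: eqP => // _.
have [l aln0] := a_neq0 an0; exists l.
by rewrite ucov_inst_var coord_neq //; case: eqP.
Qed.

Lemma omeet_inst0_uniform p q :
  (forall l, exists k, omeet (ucov (inst (al l) p) k) (ucov (inst (al l) q) k) = Some \bot) ->
  exists k, forall l, omeet (ucov (inst (al l) p) k) (ucov (inst (al l) q) k) = Some \bot.
Proof.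
move=> W0.
pose P (v : I * nat) l :=
  omeet (ucov (inst (al l) p) v.1) (ucov (inst (al l) q) v.1) = Some \bot.
have [[k n] _ Wk] : exists2 v, var_in v (LMeet p q) & forall l, P v l.
  apply: (downclosed_cover_vars Lam_dir (p := LMeet p q) (P := P)) => [v l m lm Pm|l].
    by apply: olex0; rewrite -Pm; apply: oleI2; apply: ucov_inst_homo.
  have [k Wk] := W0 l; have [k' [n pqn] Wk'] := omeet_inst_index Wk.
  by exists (k', n).
by exists k.
Qed.

Lemma ucov_inst_lim p i : olim (fun l => ucov (inst (al l) p) i) (ucov (inst a p) i).
Proof.
elim: p i => [[j n]|p IHp q IHq|p IHp q IHq] i.
- exact: ucov_inst_lim_var.
- apply: (olim_collapse Lam_dir
    (W := fun l k => omeet (ucov (inst (al l) p) k) (ucov (inst (al l) q) k))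
    (Wa := fun k => omeet (ucov (inst a p) k) (ucov (inst a q) k))).
  + by move=> k l m lm; apply: oleI2; apply: ucov_inst_homo.
  + by move=> k; apply: olimI => //; apply: ucov_inst_homo.
  + exact: omeet_inst0_uniform.
- exact: olimU.
Qed.

Lemma downclosed_tle p u : downclosed (fun l => tle (inst (al l) p) u).
Proof. by move=> l m lm; apply: tle_trans (tle_inst_homo p lm). Qed.
Arguments downclosed_tle : clear implicits.

Lemma downclosed_or_cover p u (O : Lam -> Prop) : downclosed O ->
  (forall l, O l \/ cover_le (inst (al l) p) u) -> (forall l, O l) \/ tle (inst a p) u.
Proof.
move=> dO Ocov.
pose P (v : I * nat) l := ole (ucov (inst (al l) p) v.1) (Some (lcov v.1 u)).
have dP v : downclosed (P v).
  by move=> l m lm; apply: ole_trans; apply: ucov_inst_homo.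
have dC : downclosed (fun l => exists2 v, var_in v p & P v l).
  by move=> l m lm [v pv Pm]; exists v => //; apply: dP lm Pm.
have OC l : O l \/ exists2 v, var_in v p & P v l.
  by case: (Ocov l) => [|/cover_le_inst_index]; [left|right].
case: (downclosed_cover2 Lam_dir dO dC OC) => [|allC]; [by left|right].
have [v _ Pv] := downclosed_cover_vars Lam_dir dP allC.
apply: (tle_ucov (i := v.1) (c := lcov v.1 u)) => //.
exact: olim_le (ucov_inst_lim p v.1) Pv.
Qed.

Lemma inst_meet_sup_le p0 p1 u (R : Lam -> Prop) :
  ((forall l, tle (inst (al l) p0) u) -> tle (inst a p0) u) ->
  ((forall l, tle (inst (al l) p1) u) -> tle (inst a p1) u) ->
  downclosed R -> ((forall l, R l) -> tle (inst a (LMeet p0 p1)) u) ->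
  (forall l, [\/ cover_le (inst (al l) (LMeet p0 p1)) u, tle (inst (al l) p0) u,
                 tle (inst (al l) p1) u | R l]) ->
  tle (inst a (LMeet p0 p1)) u.
Proof.
move=> IH0 IH1 dR R_le meet_le.
have d01 := downclosedU (downclosed_tle p0 u) (downclosed_tle p1 u).
have O_or_cover l : ((tle (inst (al l) p0) u \/ tle (inst (al l) p1) u) \/ R l) \/
    cover_le (inst (al l) (LMeet p0 p1)) u.
  by case: (meet_le l); tauto.
case: (downclosed_or_cover (downclosedU d01 dR) O_or_cover) => [allO|//].
case: (downclosed_cover2 Lam_dir d01 dR allO) => [all01|/R_le//].
case: (downclosed_cover2 Lam_dir (downclosed_tle p0 u) (downclosed_tle p1 u) all01).
  by move/IH0; apply: tle_meetl0.
by move/IH1; apply: tle_meetl1.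
Qed.

Lemma inst_sup_le p u : (forall l, tle (inst (al l) p) u) -> tle (inst a p) u.
Proof.
elim: p u => [[i n]|p0 IH0 p1 IH1|p0 IH0 p1 IH1] u inst_le.
- apply: (tle_ucov (ucov_atom_le (a i n))); apply: a_least => l.
  by have [/(_ i)] := tle_covers (inst_le l); rewrite lcov_atom.
- elim: u inst_le => [s|u0 IHu0 u1 IHu1|u0 IHu0 u1 IHu1] inst_le.
  + apply: (inst_meet_sup_le (R := fun=> False)) (IH0 _) (IH1 _) _ _ _ => [//|allF|l].
      by have [l _] := proj1 Lam_dir; case: (allF l).
    by case: (tle_meetlP (inst_le l)) => [c|[h|h]|[? [? //]]|[? [? [E _]]]];
      [apply: Or41|apply: Or42|apply: Or43|discriminate].
  + apply: tle_meetr; [apply: IHu0|apply: IHu1] => l; by case: (tle_meetrP (inst_le l)).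
  + pose R l := tle (inst (al l) (LMeet p0 p1)) u0 \/ tle (inst (al l) (LMeet p0 p1)) u1.
    have dR : downclosed R by apply: downclosedU; apply: downclosed_tle.
    apply: (inst_meet_sup_le (R := R)) (IH0 _) (IH1 _) dR _ _ => [allR|l].
      case: (downclosed_cover2 Lam_dir (downclosed_tle _ _) (downclosed_tle _ _) allR).
        by move/IHu0; apply: tle_joinr0.
      by move/IHu1; apply: tle_joinr1.
    case: (tle_meetlP (inst_le l)) => [c|[h|h]|[? [? //]]|[? [? [[<- <-] r]]]].
    * exact: Or41.
    * exact: Or42.
    * exact: Or43.
    * exact: Or44.
- by apply: tle_joinl; [apply: IH0|apply: IH1] => l; case: (tle_joinlP (inst_le l)).
Qed.

End DirectedSup.

Unset Implicit Arguments.

Theorem lemma4p4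
  (I : Type) (d : I -> Order.disp_t) (Li : forall i, bLatticeType (d i))
  (HUC : forall i, upper_continuous (Li i))
  (dL : Order.disp_t) (L : bLatticeType dL) (e : forall i, Li i -> L)
  (Hcop : is_coproduct0 Li L e)
  (dA : Order.disp_t) (Lam : porderType dA)
  (Hdir : up_directed (fun l m : Lam => l <= m) (fun _ => True))
  (al : Lam -> forall (i : I) (n : nat), Li i)
  (Hiso : forall l m : Lam, l <= m -> forall i n, al l i n <= al m i n)
  (a : forall (i : I) (n : nat), Li i)
  (Hsup : is_lub (fun x y : forall (i : I) (n : nat), Li i => forall i n, x i n <= y i n)
                 (fun x => exists l, x = al l) a)
  (p : lterm (I * nat)) :
  is_lub (fun x y : L => x <= y)
    (fun y => exists l, y = leval (fun v : I * nat => e v.1 (al l v.1 v.2)) p)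
    (leval (fun v : I * nat => e v.1 (a v.1 v.2)) p).
Proof.
have [[i0 _] _] := var_in_exists p.
have e_hom := proj1 Hcop.
split=> [_ [l ->]|u ub].
  by rewrite !(teval_inst e); apply: (tle_teval e_hom (tle_inst_sup Hsup l p)).
have [t ut] := teval_onto Hcop i0 u; rewrite ut in ub *.
rewrite (teval_inst e); apply: (tle_teval e_hom).
apply: (inst_sup_le HUC Hdir Hiso Hsup) => l.
by apply: (teval_reflect Hcop i0); rewrite -(teval_inst e); apply: ub; exists l.
Qed.
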